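(* Let $(\mathcal{U},f,g,\preccurlyeq)$ be a fault-tolerance partially ordered $(m,n)$-semiring as described in the context, and let $x_1,\ldots,x_m,y_1,\ldots,y_n\in\mathcal{U}$ be disjoint components. Then (i) $f(x_1^m)\preccurlyeq f(f(x_1^m),f(x_1^m),\ldots,f(x_1^m))$ (with $m$ copies of $f(x_1^m)$); (ii) $g(g(y_1^n),g(y_1^n),\ldots,g(y_1^n))\preccurlyeq g(y_1^n)$ (with $n$ copies of $g(y_1^n)$).
   Context: Notation: $x_i^j$ denotes $x_i,\ldots,x_j$. $(\mathcal{U},f,g)$ is an $(m,n)$-semiring: $f$ is an associative $m$-ary and $g$ an associative $n$-ary operation on $\mathcal{U}$ (associativity of a $k$-ary $h$: $h(x_1^{i-1},h(x_i^{k+i-1}),x_{k+i}^{2k-1})=h(x_1^{j-1},h(x_j^{k+j-1}),x_{k+j}^{2k-1})$ for $1\le i\le j\le k$), and $g$ distributes over $f$ in every position. $\mathcal{U}$ is interpreted as a set of systems; $f(x_1^m)$ is the system that fails when any $x_i$ fails, $g(y_1^n)$ the system that fails only when all $y_j$ fail; elements are assumed to be disjoint components (failing independently), which imposes no further algebraic condition. $\mathbf{0}\in\mathcal{U}$ (the always-up system) is an $f$-identity ($f(\mathbf{0},\ldots,x,\ldots,\mathbf{0})=x$ in every position) and $\mathbf{1}$ (the always-down system) is a $g$-identity; moreover $g(y_1^{j-1},\mathbf{0},y_{j+1}^n)=\mathbf{0}$ and $f(x_1^{i-1},\mathbf{1},x_{i+1}^m)=\mathbf{1}$ for all arguments and positions.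 $\preccurlyeq$ is a partial order on $\mathcal{U}$ (''fault-tolerance partial order'') such that $(\mathcal{U},f,g,\preccurlyeq)$ is a partially ordered $(m,n)$-semiring: $a\preccurlyeq b$ implies $f(x_1^{i-1},a,x_{i+1}^m)\preccurlyeq f(x_1^{i-1},b,x_{i+1}^m)$ and $g(y_1^{j-1},a,y_{j+1}^n)\preccurlyeq g(y_1^{j-1},b,y_{j+1}^n)$ for all arguments and all positions; and $\mathbf{0}\preccurlyeq a\preccurlyeq\mathbf{1}$ for all $a\in\mathcal{U}$. *)

From mathcomp Require Import all_boot.
Set Implicit Arguments. Unset Strict Implicit. Unset Printing Implicit Defensive.

(* The k-tuple (s_0, ..., s_{k-1}) built from a sequence s (d is an
   irrelevant default, only used when size s < k). *)
Definition tup_of (U : Type) (k : nat) (d : U) (s : seq U) : k.-tuple U :=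
  [tuple nth d s i | i < k].

Definition tset (U : Type) (k : nat) (a : k.-tuple U) (j : 'I_k) (v : U)
  : k.-tuple U :=
  [tuple if i == j then v else tnth a i | i < k].

(* Associativity of a k-ary operation h: for every (x_1,...,x_{2k-1}),
   h(x_1^{i-1}, h(x_i^{k+i-1}), x_{k+i}^{2k-1}) is independent of
   i in 1..k  (here i is 0-based). *)
Definition assoc_op (U : Type) (k : nat) (d : U) (h : k.-tuple U -> U) : Prop :=
  forall (s : seq U), size s = (2 * k - 1)%N ->
  forall i j : nat, (i <= j < k)%N ->
    h (tup_of k d (take i s ++ h (tup_of k d (take k (drop i s))) :: drop (i + k) s))
    = h (tup_of k d (take j s ++ h (tup_of k d (take k (drop j s))) :: drop (j + k) s)).

(* Partially ordered (m,n)-semiring (U, f, g, le) with f-identity zero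
   (always-up system) and g-identity one (always-down system), satisfying
   the fault-tolerance conditions of the context. *)
Record fault_tolerance_po_semiring (U : Type) (m n : nat)
    (f : m.-tuple U -> U) (g : n.-tuple U -> U) (zero one : U)
    (le : U -> U -> Prop) : Prop := {
  ft_m : (2 <= m)%N;
  ft_n : (2 <= n)%N;
  ft_f_assoc : assoc_op zero f;
  ft_g_assoc : assoc_op zero g;
  ft_distr : forall (a : n.-tuple U) (j : 'I_n) (x : m.-tuple U),
      g (tset a j (f x)) = f [tuple g (tset a j (tnth x i)) | i < m];
  ft_zero_id : forall (i : 'I_m) (x : U), f (tset [tuple zero | _ < m] i x) = x;
  ft_one_id : forall (j : 'I_n) (y : U), g (tset [tuple one | _ < n] j y) = y;
  ft_g_zero : forall (a : n.-tuple U) (j : 'I_n), g (tset a j zero) = zero;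
  ft_f_one : forall (a : m.-tuple U) (i : 'I_m), f (tset a i one) = one;
  ft_le_refl : forall a, le a a;
  ft_le_antisym : forall a b, le a b -> le b a -> a = b;
  ft_le_trans : forall a b c, le a b -> le b c -> le a c;
  ft_f_mono : forall (x : m.-tuple U) (i : 'I_m) (a b : U),
      le a b -> le (f (tset x i a)) (f (tset x i b));
  ft_g_mono : forall (y : n.-tuple U) (j : 'I_n) (a b : U),
      le a b -> le (g (tset y j a)) (g (tset y j b));
  ft_zero_le : forall a, le zero a;
  ft_le_one : forall a, le a one
}.

From mathcomp Require Import all_boot.

(* Idea: by the identity law, [c] is the value of the tuple (c, e, ..., e),
   where [e] is the identity element and [e <= c].  Raising the entries [e]
   to [c] one at a time can only increase the value, by monotonicity; at the
   end all entries are [c].  Part (ii) is the same argument for [g] and the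
   dual order, [one] being the top element. *)

Section MonotoneOperation.

Variables (U : Type) (k : nat) (h : k.-tuple U -> U) (R : U -> U -> Prop).
Hypothesis R_refl : forall a, R a a.
Hypothesis R_trans : forall a b c, R a b -> R b c -> R a c.
Hypothesis h_mono : forall (x : k.-tuple U) (i : 'I_k) (a b : U),
  R a b -> R (h (tset x i a)) (h (tset x i b)).

Lemma mono_pointwise (a b : k.-tuple U) :
  (forall i, R (tnth a i) (tnth b i)) -> R (h a) (h b).
Proof.
move=> Rab.
pose mix j := [tuple if (i < j)%N then tnth b i else tnth a i | i < k].
have mix0 : mix 0 = a by apply: eq_from_tnth => i; rewrite tnth_mktuple.
have mixk : mix k = b by apply: eq_from_tnth => i; rewrite tnth_mktuple ltn_ord.
have mixS j : R (h (mix j)) (h (mix j.+1)).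
  case: (ltnP j k) => [jk | kj].
    pose o := Ordinal jk.
    have -> : mix j = tset (mix j) o (tnth a o).
      apply: eq_from_tnth => i; rewrite !tnth_mktuple.
      by case: eqP => [->|]; rewrite /= ?ltnn.
    have -> : mix j.+1 = tset (mix j) o (tnth b o).
      apply: eq_from_tnth => i; rewrite !tnth_mktuple ltnS leq_eqVlt.
      case: (eqVneq i o) => [->|ne_io]; first by rewrite eqxx.
      by rewrite -[j]/(val o) val_eqE (negbTE ne_io).
    exact: h_mono.
  have -> : mix j.+1 = mix j.
    apply: eq_from_tnth => i; rewrite !tnth_mktuple.
    by rewrite !(leq_trans (ltn_ord i)) ?(leq_trans kj).
  exact: R_refl.
have mix_chain j : R (h (mix 0)) (h (mix j)).
  by elim: j => [|j IHj]; [exact: R_refl | exact: R_trans IHj (mixS j)].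
by rewrite -mix0 -mixk.
Qed.

Lemma le_op_const (e c : U) (i0 : 'I_k) :
  R e c -> h (tset [tuple e | _ < k] i0 c) = c -> R c (h [tuple c | _ < k]).
Proof.
move=> Rec id_c; rewrite -{1}id_c; apply: mono_pointwise => i.
by rewrite !tnth_mktuple; case: eqP.
Qed.

End MonotoneOperation.

Theorem theorem11 (U : Type) (m n : nat)
    (f : m.-tuple U -> U) (g : n.-tuple U -> U) (zero one : U)
    (le : U -> U -> Prop) :
  fault_tolerance_po_semiring f g zero one le ->
  forall (x : m.-tuple U) (y : n.-tuple U),
    le (f x) (f [tuple f x | _ < m]) /\
    le (g [tuple g y | _ < n]) (g y).
Proof.
move=> H x y.
have i0 : 'I_m by exists 0; apply: leq_trans (ft_m H).
have j0 : 'I_n by exists 0; apply: leq_trans (ft_n H).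
split.
- apply: (@le_op_const U m f le (ft_le_refl H) (ft_le_trans H) (ft_f_mono H)
            zero _ i0).
    exact: ft_zero_le H _.
  exact: ft_zero_id H _ _.
- apply: (@le_op_const U n g (fun a b => le b a) (ft_le_refl H)
            (fun a b c ab bc => ft_le_trans H bc ab)
            (fun t j a b ab => ft_g_mono H t j ab) one _ j0).
    exact: ft_le_one H _.
  exact: ft_one_id H _ _.
Qed.
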